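(* Consider a time-invariant UMCO channel on finite alphabets and suppose that for every time-invariant channel input distribution $\pi^\infty$ the output transition matrix $\mathbf P(\pi^\infty)=\{\mathbf P^{\pi^\infty}(b_0|b_{-1})\}_{b_0,b_{-1}\in\mathbb B}$ is irreducible. Then for every $\pi^\infty$ and every initial distribution $\mu$, $$J(\pi^\infty,\mu)=\nu(\pi^\infty)^T\ell(\pi^\infty)=:J(\pi^\infty),$$ which is independent of $\mu$, where $\nu(\pi^\infty)$ is the unique invariant distribution, $\mathbf P(\pi^\infty)\nu(\pi^\infty)=\nu(\pi^\infty)$. If moreover there is a time-invariant $\pi^{\infty,*}$ with $J(\pi^{\infty,*})=\max_{\pi^\infty}J(\pi^\infty)$, then there exist $V:\mathbb B\to\mathbb R$ such that $$J(\pi^{\infty,*})+V(b_{-1})=\sup_{\pi^\infty(\cdot|b_{-1})}\Big\{\ell(b_{-1},\pi^\infty(b_{-1}))+\sum_{z\in\mathbb B}V(z)\mathbf P^{\pi^\infty}(z|b_{-1})\Big\}\quad\forall b_{-1}\in\mathbb B,$$ and $J(\pi^{\infty,*})=C^{FB,UMCO}_{A^\infty\to B^\infty}=\liminf_{n\to\infty}\frac1n\sup_{\pi^\infty}\mathbf E^{\pi^\infty}_\mu[\sum_{i=0}^{n-1}\log\frac{\mathbf P(B_i|B_{i-1},A_i)}{\mathbf P^{\pi^\infty}(B_i|B_{i-1})}]$ for every $\mu$.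
   Context: Time-invariant UMCO channel $\mathbf P(b_i|b_{i-1},a_i)$ on finite alphabets $\mathbb A,\mathbb B$; time-invariant input $\pi^\infty(a_i|b_{i-1})$; $\mathbf P^{\pi^\infty}(b_i|b_{i-1})=\sum_a\mathbf P(b_i|b_{i-1},a)\pi^\infty(a|b_{i-1})$. $\ell(b,\pi^\infty(b))=\sum_{a}\sum_{b'}\log\frac{\mathbf P(b'|b,a)}{\mathbf P^{\pi^\infty}(b'|b)}\mathbf P(b'|b,a)\pi^\infty(a|b)$, and $\ell(\pi^\infty)\in\mathbb R^{|\mathbb B|}$ is the vector of these values. $J(\pi^\infty,\mu)=\liminf_{n\to\infty}\frac1n\mathbf E^{\pi^\infty}_\mu[\sum_{i=0}^{n-1}\log\frac{\mathbf P(B_i|B_{i-1},A_i)}{\mathbf P^{\pi^\infty}(B_i|B_{i-1})}]$, with $B_{-1}\sim\mu$. *)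

From mathcomp Require Import all_boot.
From Stdlib Require Import Reals.
Set Implicit Arguments. Unset Strict Implicit. Unset Printing Implicit Defensive.
Open Scope R_scope.

Definition rsum (T : finType) (f : T -> R) : R := \big[Rplus/0%R]_(i : T) f i.

Definition is_dist (T : finType) (q : T -> R) : Prop :=
  (forall t, 0 <= q t) /\ rsum q = 1.

Section UMCO.
Variables (A B : finType).

(* Channel: P b a b' = P(b_i = b' | b_{i-1} = b, a_i = a). *)
Definition is_channel (P : B -> A -> B -> R) : Prop :=
  forall b a, is_dist (P b a).

(* Time-invariant input: pi b a = pi^oo(a_i = a | b_{i-1} = b). *)
Definition is_policy (pi : B -> A -> R) : Prop := forall b, is_dist (pi b).

Variable P : B -> A -> B -> R.

Definition Pq (b : B) (q : A -> R) (b' : B) : R := rsum (fun a => P b a b' * q a).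

(* ell(b, q) = sum_a sum_b' log(P(b'|b,a)/P^q(b'|b)) P(b'|b,a) q(a)
   (Stdlib ln is 0 on nonpositive arguments, giving the 0 log 0 = 0 convention). *)
Definition ellq (b : B) (q : A -> R) : R :=
  rsum (fun a => rsum (fun b' => ln (P b a b' / Pq b q b') * P b a b' * q a)).

Definition Pout (pi : B -> A -> R) (b b' : B) : R := Pq b (pi b) b'.
Definition ell (pi : B -> A -> R) (b : B) : R := ellq b (pi b).

Fixpoint ptrans (pi : B -> A -> R) (n : nat) (b b' : B) : R :=
  match n with
  | O => if b == b' then 1 else 0
  | S m => rsum (fun z => ptrans pi m b z * Pout pi z b')
  end.

Definition out_irreducible (pi : B -> A -> R) : Prop :=
  forall b b', exists n, 0 < ptrans pi n b b'.

Definition is_invariant (pi : B -> A -> R) (nu : B -> R) : Prop :=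
  is_dist nu /\ forall b', rsum (fun b => Pout pi b b' * nu b) = nu b'.

(* Distribution of B_{i-1} when B_{-1} ~ mu. *)
Fixpoint distB (pi : B -> A -> R) (mu : B -> R) (i : nat) (b' : B) : R :=
  match i with
  | O => mu b'
  | S m => rsum (fun b => distB pi mu m b * Pout pi b b')
  end.

(* E^{pi}_mu [ log P(B_i|B_{i-1},A_i) / P^{pi}(B_i|B_{i-1}) ], computed from the
   joint law of (B_{i-1}, A_i, B_i). *)
Definition termExp (pi : B -> A -> R) (mu : B -> R) (i : nat) : R :=
  rsum (fun b => rsum (fun a => rsum (fun b' =>
    distB pi mu i b * pi b a * P b a b' * ln (P b a b' / Pout pi b b')))).

Definition expSum (pi : B -> A -> R) (mu : B -> R) (n : nat) : R :=
  \big[Rplus/0%R]_(0 <= i < n) termExp pi mu i.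

Definition Jinv (pi : B -> A -> R) (nu : B -> R) : R := rsum (fun b => nu b * ell pi b).

End UMCO.

Definition is_liminf (u : nat -> R) (l : R) : Prop :=
  (forall eps, 0 < eps -> exists N, forall n, (N <= n)%nat -> l - eps < u n) /\
  (forall eps, 0 < eps -> forall N, exists n, (N <= n)%nat /\ u n < l + eps).

From mathcomp Require Import all_boot all_order all_algebra Rstruct.
From Stdlib Require Import Reals Lra FunctionalExtensionality Classical.
Set Implicit Arguments. Unset Strict Implicit. Unset Printing Implicit Defensive.

(* For an irreducible stochastic matrix [K], Fredholm's alternative for [I - K]
   together with a minimum principle yields a unique invariant distribution [nu]
   and, for every reward [v], a solution [h] of the Poisson equation
   [v + K h = nu^T v + h].  Telescoping along the output chain then gives
   [E[sum_{i<n} ell] = n J + O(|h|)], so the time average tends to [J = nu^T ell]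
   whatever the initial law.  For an optimal [pistar], changing the input law at a
   single state cannot make the Poisson defect positive, since the modified chain
   visits that state with positive frequency: this is the optimality equation with
   [V = h], and the same telescoping bounds the average of every policy by
   [J + O(1/n)], so the optimal averages also tend to [J]. *)


Section FredholmAlternative.
Import GRing.Theory.
Local Open Scope ring_scope.

Lemma solvable_of_left_kernel_orth (F : fieldType) n (M : 'M[F]_n) (v : 'cV[F]_n) :
  (forall w : 'rV_n, w *m M = 0 -> w *m v = 0) -> exists h, M *m h = v.
Proof.
move=> orth.
suff: (v^T <= M^T)%MS.
  by case/submxP => D HD; exists D^T; rewrite -[v]trmxK HD trmx_mul trmxK.
rewrite submxE; apply/eqP/matrixP => i k.
have kerM : (col k (cokermx M^T))^T *m M = 0.
  by rewrite -[M in _ *m M]trmxK -trmx_mul colE mulmxA mulmx_coker mul0mx trmx0.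
have := congr1 (fun u : 'M_1 => u 0 0) (orth _ kerM); rewrite !mxE [i]ord1 => E.
by rewrite -[RHS]E; apply: eq_bigr => j _; rewrite !mxE mulrC.
Qed.

Lemma solvable_of_left_kernel_orth_fin (F : fieldType) (T : finType)
    (M : T -> T -> F) (v : T -> F) :
  (forall w : T -> F, (forall j, \sum_i w i * M i j = 0) -> \sum_i w i * v i = 0) ->
  exists h : T -> F, forall i, \sum_j M i j * h j = v i.
Proof.
move=> orth.
have sumE (G : T -> F) : \sum_x G x = \sum_(k < #|T|) G (enum_val k).
  by rewrite -big_enum_val; apply: eq_bigl => x; rewrite inE.
pose Mx : 'M[F]_#|T| := \matrix_(k, l) M (enum_val k) (enum_val l).
have [|h Hh] := @solvable_of_left_kernel_orth F _ Mx (\col_k v (enum_val k)).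
  move=> w /matrixP wM; apply/matrixP => i0 j0; rewrite [i0]ord1 [j0]ord1 !mxE.
  under eq_bigr do rewrite mxE.
  have -> : \sum_k w 0 k * v (enum_val k) = \sum_x w 0 (enum_rank x) * v x.
    by rewrite sumE; apply: eq_bigr => k _; rewrite enum_valK.
  apply: orth => y; have := wM 0 (enum_rank y); rewrite !mxE => E.
  by rewrite -[RHS]E sumE; apply: eq_bigr => k _; rewrite enum_valK mxE enum_rankK.
exists (fun x => h (enum_rank x) 0) => x.
have /matrixP/(_ (enum_rank x) 0) := Hh; rewrite !mxE enum_rankK => <-.
by rewrite sumE; apply: eq_bigr => k _; rewrite mxE enum_rankK enum_valK.
Qed.

End FredholmAlternative.

Open Scope R_scope.

Section RealSums.
Variable T : finType.
Implicit Types f g : T -> R.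

Lemma rsum_ext f g : (forall i, f i = g i) -> rsum f = rsum g.
Proof. by move=> fg; apply: eq_bigr => i _. Qed.

Lemma rsum0 : rsum (fun _ : T => 0) = 0.
Proof. exact: big1. Qed.

Lemma rsumD f g : rsum (fun i => f i + g i) = rsum f + rsum g.
Proof. exact: big_split. Qed.

Lemma rsumZl c f : rsum (fun i => c * f i) = c * rsum f.
Proof. by rewrite /rsum big_distrr. Qed.

Lemma rsumZr c f : rsum (fun i => f i * c) = rsum f * c.
Proof. by rewrite /rsum big_distrl. Qed.

Lemma rsumB f g : rsum (fun i => f i - g i) = rsum f - rsum g.
Proof.
have : rsum (fun i => f i - g i) + rsum g = rsum f.
  by rewrite -rsumD; apply: rsum_ext => i; ring.
lra.
Qed.

Lemma rsum_le f g : (forall i, f i <= g i) -> rsum f <= rsum g.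
Proof.
move=> fg; apply: (big_ind2 Rle (Rle_refl 0)) => // *; exact: Rplus_le_compat.
Qed.

Lemma rsum_ge0 f : (forall i, 0 <= f i) -> 0 <= rsum f.
Proof. by move=> f0; rewrite -rsum0; apply: rsum_le. Qed.

Lemma Rabs_rsum_le f : Rabs (rsum f) <= rsum (fun i => Rabs (f i)).
Proof.
apply: (big_ind2 (fun x y => Rabs x <= y)) => [|x1 x2 y1 y2 le1 le2|i _].
- by rewrite Rabs_R0; apply: Rle_refl.
- by apply: Rle_trans (Rabs_triang _ _) _; lra.
- exact: Rle_refl.
Qed.

Lemma rsumD1 f i0 : rsum f = f i0 + rsum (fun i => if i == i0 then 0 else f i).
Proof.
rewrite /rsum (bigD1 i0) //= [in RHS](bigD1 i0) //= eqxx Rplus_0_l.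
by congr (_ + _); apply: eq_bigr => i /negbTE ->.
Qed.

Lemma rsum1 f i0 : (forall i, i != i0 -> f i = 0) -> rsum f = f i0.
Proof.
move=> f0; rewrite (rsumD1 f i0) (@rsum_ext _ (fun _ => 0)) ?rsum0 ?Rplus_0_r //.
by move=> i; case: eqP => // /eqP; apply: f0.
Qed.

Lemma rsum_ge_term f i0 : (forall i, 0 <= f i) -> f i0 <= rsum f.
Proof.
move=> f0; rewrite (rsumD1 f i0).
suff : 0 <= rsum (fun i => if i == i0 then 0 else f i) by lra.
by apply: rsum_ge0 => i; case: eqP => _ //; apply: Rle_refl.
Qed.

Lemma rsum_eq0P f : (forall i, 0 <= f i) -> rsum f = 0 -> forall i, f i = 0.
Proof. by move=> f0 sf0 i; have := rsum_ge_term i f0; have := f0 i; lra. Qed.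

Lemma exists_argmin (t0 : T) f : exists i, forall j, f i <= f j.
Proof.
case: (@Order.TotalTheory.arg_minP _ R T t0 xpredT f isT) => i _ min_i.
by exists i => j; apply/RleP; apply: min_i.
Qed.

End RealSums.

Lemma sumR_nat_recr (F : nat -> R) n :
  \big[Rplus/0]_(0 <= i < n.+1) F i = \big[Rplus/0]_(0 <= i < n) F i + F n.
Proof. exact: big_nat_recr. Qed.

Lemma rsumC (T U : finType) (f : T -> U -> R) :
  rsum (fun i => rsum (fun j => f i j)) = rsum (fun j => rsum (fun i => f i j)).
Proof. exact: exchange_big. Qed.

Section StochasticMatrix.
Variables (T : finType) (K : T -> T -> R).
Hypothesis K_stoch : forall x, is_dist (K x).

Fixpoint kpow (n : nat) (x y : T) : R :=
  match n with
  | O => if x == y then 1 else 0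
  | S m => rsum (fun z => kpow m x z * K z y)
  end.

Definition irreducible : Prop := forall x y, exists n, 0 < kpow n x y.

Definition invariant (w : T -> R) : Prop :=
  forall y, rsum (fun x => K x y * w x) = w y.

Definition kapply (h : T -> R) (x : T) : R := rsum (fun y => K x y * h y).

Lemma K_ge0 x y : 0 <= K x y.
Proof. exact: (proj1 (K_stoch x)). Qed.

Lemma kpow_ge0 n x y : 0 <= kpow n x y.
Proof.
elim: n x y => [|n IH] x y /=; first by case: eqP => _; lra.
by apply: rsum_ge0 => z; apply: Rmult_le_pos; [apply: IH | apply: K_ge0].
Qed.

Lemma kapply_const c x : kapply (fun _ => c) x = c.
Proof. by rewrite /kapply rsumZr (proj2 (K_stoch x)) Rmult_1_l. Qed.

Lemma invariant_scale c w : invariant w -> invariant (fun x => c * w x).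
Proof. by move=> inv_w y; rewrite -(inv_w y) -rsumZl; apply: rsum_ext => x; ring. Qed.

Lemma invariant_lin a c w1 w2 :
  invariant w1 -> invariant w2 -> invariant (fun x => a * w1 x + c * w2 x).
Proof.
move=> inv1 inv2 y; rewrite -(inv1 y) -(inv2 y) -!rsumZl -rsumD.
by apply: rsum_ext => x; ring.
Qed.

Lemma invariant_kpow w : invariant w ->
  forall n y, rsum (fun x => w x * kpow n x y) = w y.
Proof.
move=> inv_w; elim=> [|n IH] y /=.
  by rewrite (rsum1 (i0 := y)) ?eqxx ?Rmult_1_r // => x /negbTE ->; rewrite Rmult_0_r.
rewrite -[RHS]inv_w; under rsum_ext do rewrite -rsumZl.
rewrite rsumC; apply: rsum_ext => z.
by rewrite -(IH z) -rsumZl; apply: rsum_ext => x; ring.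
Qed.

(* Invariance of [w] turns the triangle inequality [|w| <= K^T |w|] into a pointwise
   inequality between two functions with the same total mass, hence an equality. *)
Lemma invariant_abs w : invariant w -> invariant (fun x => Rabs (w x)).
Proof.
move=> inv_w.
pose d y := rsum (fun x => K x y * Rabs (w x)) - Rabs (w y).
have d_ge0 y : 0 <= d y.
  rewrite /d -{1}(inv_w y).
  suff : Rabs (rsum (fun x => K x y * w x)) <= rsum (fun x => K x y * Rabs (w x)) by lra.
  apply: Rle_trans (Rabs_rsum_le _) (Req_le _ _ _).
  by apply: rsum_ext => x; rewrite Rabs_mult Rabs_pos_eq //; apply: K_ge0.
have d_sum : rsum d = 0.
  rewrite /d rsumB rsumC.
  under rsum_ext do rewrite rsumZr (proj2 (K_stoch _)) Rmult_1_l.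
  ring.
by move=> y; have := rsum_eq0P d_ge0 d_sum y; rewrite /d; lra.
Qed.

Lemma exists_kapply_ge (x0 : T) h : exists x, h x <= kapply h x.
Proof.
have [x min_x] := exists_argmin x0 h; exists x.
rewrite -{1}(kapply_const (h x) x).
by apply: rsum_le => y; apply: Rmult_le_compat_l; [apply: K_ge0 | apply: min_x].
Qed.

Lemma kapply_solvable_of_invariant_orth v :
  (forall w, invariant w -> rsum (fun x => w x * v x) = 0) ->
  exists h, forall x, h x - kapply h x = v x.
Proof.
move=> orth.
pose M x y := (if x == y then 1 else 0) - K x y.
have fredholm : (forall w : T -> R, (forall y, rsum (fun x => w x * M x y) = 0) ->
                   rsum (fun x => w x * v x) = 0) ->
                exists h : T -> R, forall x, rsum (fun y => M x y * h y) = v x.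
  exact: (@solvable_of_left_kernel_orth_fin R T M v).
have [w wM|h Mh] := fredholm.
  apply: orth => y; have := wM y.
  rewrite (rsum_ext (g := fun x => (if x == y then 1 else 0) * w x - K x y * w x));
    last by move=> x; rewrite /M; ring.
  rewrite rsumB (rsum1 (i0 := y)) ?eqxx ?Rmult_1_l; first lra.
  by move=> x /negbTE ->; rewrite Rmult_0_l.
exists h => x; rewrite -Mh.
rewrite (rsum_ext (g := fun y => (if x == y then 1 else 0) * h y - K x y * h y));
  last by move=> y; rewrite /M; ring.
rewrite rsumB (rsum1 (i0 := x)) ?eqxx ?Rmult_1_l //.
by move=> y; rewrite eq_sym => /negbTE ->; rewrite Rmult_0_l.
Qed.

(* A solution of [h - K h = 1] is impossible at a minimum of [h]; Fredholm's
   alternative then yields an invariant measure of nonzero mass. *)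
Lemma exists_invariant_dist (x0 : T) : exists nu, invariant nu /\ is_dist nu.
Proof.
have [w [inv_w w_mass]] : exists w, invariant w /\ rsum w <> 0.
  apply: NNPP => no_w.
  have [|h Hh] := @kapply_solvable_of_invariant_orth (fun _ => 1).
    move=> w inv_w; apply: NNPP => w_mass; apply: no_w; exists w; split => //.
    by move=> w0; apply: w_mass; rewrite -w0; apply: rsum_ext => x; ring.
  by have [x Hx] := exists_kapply_ge x0 h; have := Hh x; lra.
pose s := rsum (fun x => Rabs (w x)).
have s_pos : 0 < s.
  have := Rabs_rsum_le w; have := Rabs_pos_lt _ w_mass; rewrite -/s; lra.
exists (fun x => / s * Rabs (w x)); split.
  by apply: invariant_scale; apply: invariant_abs.
split; last by rewrite rsumZl -/s Rinv_l //; lra.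
by move=> x; apply: Rmult_le_pos; [apply/Rlt_le/Rinv_0_lt_compat | apply: Rabs_pos].
Qed.

Section Irreducible.
Hypothesis K_irr : irreducible.

Lemma invariant_ge0_pos w : invariant w -> (forall x, 0 <= w x) ->
  forall x y, 0 < w x -> 0 < w y.
Proof.
move=> inv_w w_ge0 x y wx_pos; have [n Kn_pos] := K_irr x y.
rewrite -(invariant_kpow inv_w n y).
apply: Rlt_le_trans (rsum_ge_term x _); first exact: Rmult_lt_0_compat.
by move=> z; apply: Rmult_le_pos; [apply: w_ge0 | apply: kpow_ge0].
Qed.

(* The positive part of [w] is invariant; by irreducibility it is either
   positive everywhere, impossible for mass [0], or identically zero. *)
Lemma invariant_mass0 w : invariant w -> rsum w = 0 -> forall x, w x = 0.
Proof.
move=> inv_w w_mass.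
pose p x := / 2 * Rabs (w x) + / 2 * w x.
have p_inv : invariant p by apply: invariant_lin => //; apply: invariant_abs.
have w_le0 x : w x <= 0.
  apply: Rnot_lt_le => wx_pos.
  have px_pos : 0 < p x by rewrite /p Rabs_pos_eq; lra.
  have p_ge0 y : 0 <= p y.
    by rewrite /p; have := Rle_abs (- w y); rewrite Rabs_Ropp; lra.
  have w_pos y : 0 < w y.
    have := invariant_ge0_pos p_inv p_ge0 y px_pos; rewrite /p.
    by case: (Rle_lt_dec (w y) 0) => // wy_le0; rewrite Rabs_left1 //; lra.
  have := rsum_ge_term x (fun y => Rlt_le _ _ (w_pos y)); lra.
have mw_mass : rsum (fun x => - w x) = 0.
  by rewrite -(Rmult_0_r (-1)) -w_mass -rsumZl; apply: rsum_ext => x; ring.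
have mw_ge0 y : 0 <= - w y by have := w_le0 y; lra.
by move=> x; have := rsum_eq0P mw_ge0 mw_mass x; lra.
Qed.

Variable nu : T -> R.
Hypotheses (nu_inv : invariant nu) (nu_dist : is_dist nu).

Lemma invariant_eq_mass w : invariant w -> forall x, w x = rsum w * nu x.
Proof.
move=> inv_w x.
have inv_d : invariant (fun x => 1 * w x + (- rsum w) * nu x) by apply: invariant_lin.
have := invariant_mass0 inv_d _ x; rewrite rsumD !rsumZl (proj2 nu_dist); lra.
Qed.

Lemma invariant_dist_pos x : 0 < nu x.
Proof.
have [y nuy_pos] : exists y, 0 < nu y.
  apply: NNPP => nu_npos.
  have nu0 y : nu y = 0.
    apply: Rle_antisym; last exact: (proj1 nu_dist).
    by apply: Rnot_lt_le => nuy_pos; apply: nu_npos; exists y.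
  by have := proj2 nu_dist; rewrite (rsum_ext nu0) rsum0; lra.
exact: invariant_ge0_pos nu_inv (proj1 nu_dist) y x nuy_pos.
Qed.

Lemma poisson_solution v :
  exists h, forall x, v x = rsum (fun y => nu y * v y) + h x - kapply h x.
Proof.
set J := rsum (fun y => nu y * v y).
have [w inv_w|h Hh] := @kapply_solvable_of_invariant_orth (fun x => v x - J).
  under rsum_ext do rewrite (invariant_eq_mass inv_w).
  rewrite (rsum_ext (g := fun x => rsum w * (nu x * v x) - (rsum w * J) * nu x)).
    by rewrite rsumB !rsumZl (proj2 nu_dist) -/J; ring.
  by move=> x; ring.
by exists h => x; have := Hh x; lra.
Qed.

End Irreducible.

End StochasticMatrix.

Lemma eventually_div_INR_lt C eps : 0 < eps ->
  exists N, (0 < N)%nat /\ forall n, (N <= n)%nat -> C / INR n < eps.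
Proof.
move=> eps_pos; have [N HN] := INR_archimed eps (Rabs C) eps_pos.
exists (maxn 1 N); split => [|n le_Nn]; first by rewrite leq_maxl.
have n_pos : 0 < INR n by apply: lt_0_INR; apply/ltP; apply: leq_trans le_Nn; rewrite leq_maxl.
have : INR N <= INR n by apply: le_INR; apply/leP; apply: leq_trans le_Nn; rewrite leq_maxr.
move/(Rmult_le_compat_r eps _ _ (Rlt_le _ _ eps_pos)) => le_eps.
apply: (Rmult_lt_reg_r (INR n)) => //; rewrite /Rdiv Rmult_assoc Rinv_l; last by lra.
by have := Rle_abs C; lra.
Qed.

Lemma is_liminf_of_div_INR_bound (u : nat -> R) l C :
  (forall n, (0 < n)%nat -> l - C / INR n <= u n <= l + C / INR n) -> is_liminf u l.
Proof.
move=> u_near; split => [eps eps_pos|eps eps_pos N0].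
  have [N [N_gt0 HN]] := eventually_div_INR_lt C eps_pos.
  by exists N => n le_Nn; have := u_near n (leq_trans N_gt0 le_Nn); have := HN n le_Nn; lra.
have [N [N_gt0 HN]] := eventually_div_INR_lt C eps_pos.
have le_N : (N <= maxn N0 N)%nat by rewrite leq_maxr.
exists (maxn N0 N); split; first by rewrite leq_maxl.
by have := u_near _ (leq_trans N_gt0 le_N); have := HN _ le_N; lra.
Qed.

Lemma is_liminf_lub (E : nat -> R -> Prop) l C :
  (forall n, bound (E n)) -> (forall n, exists x, E n x) ->
  (forall n, (0 < n)%nat -> forall x, E n x -> x <= l + C / INR n) ->
  (forall n, (0 < n)%nat -> exists x, E n x /\ l - C / INR n <= x) ->
  exists c, (forall n, is_lub (E n) (c n)) /\ is_liminf c l.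
Proof.
move=> E_bound E_ne E_ub E_lb.
exists (fun n => proj1_sig (completeness (E n) (E_bound n) (E_ne n))); split.
  by move=> n; case: completeness.
apply: (is_liminf_of_div_INR_bound (C := C)) => n n_gt0.
case: completeness => c [c_ub c_lub] /=; split.
  by have [x [Ex le_x]] := E_lb n n_gt0; apply: Rle_trans le_x (c_ub x Ex).
by apply: c_lub => x; apply: E_ub.
Qed.

Section OutputChain.
Variables (A B : finType) (P : B -> A -> B -> R).

Lemma ptrans_kpow pi n b b' : ptrans P pi n b b' = kpow (Pout P pi) n b b'.
Proof. by elim: n b b' => [|n IH] b b' //=; apply: rsum_ext => z; rewrite IH. Qed.

Lemma out_irreducible_kpow pi : out_irreducible P pi -> irreducible (Pout P pi).
Proof. by move=> irr b b'; have [n Pn] := irr b b'; exists n; rewrite -ptrans_kpow. Qed.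

Hypothesis P_chan : is_channel P.

Lemma Pq_dist b q : is_dist q -> is_dist (Pq P b q).
Proof.
move=> [q_ge0 q_mass]; split.
  by move=> b'; apply: rsum_ge0 => a; apply: Rmult_le_pos => //; apply: (proj1 (P_chan b a)).
rewrite /Pq rsumC -[RHS]q_mass; apply: rsum_ext => a.
by rewrite rsumZr (proj2 (P_chan b a)) Rmult_1_l.
Qed.

Lemma Pout_stoch pi : is_policy pi -> forall b, is_dist (Pout P pi b).
Proof. by move=> pi_pol b; apply: Pq_dist. Qed.

(* The quantity maximised over [q] in the average-cost optimality equation. *)
Definition qvalue (h : B -> R) (b : B) (q : A -> R) : R :=
  ellq P b q + rsum (fun z => h z * Pq P b q z).

Variable pi : B -> A -> R.

Definition poisson_defect (J : R) (h : B -> R) (b : B) : R :=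
  qvalue h b (pi b) - J - h b.

Lemma poisson_defectE J h b :
  poisson_defect J h b = ell P pi b + kapply (Pout P pi) h b - h b - J.
Proof.
rewrite /poisson_defect /qvalue /kapply /ell /Pout.
by rewrite (rsum_ext (g := fun z => Pq P b (pi b) z * h z)) => [|z]; [ring | apply: Rmult_comm].
Qed.

Lemma Jinv_sub_eq nu J h : invariant (Pout P pi) nu -> is_dist nu ->
  Jinv P pi nu - J = rsum (fun b => nu b * poisson_defect J h b).
Proof.
move=> nu_inv [_ nu_mass].
have nu_Kh : rsum (fun b => nu b * kapply (Pout P pi) h b) = rsum (fun b => nu b * h b).
  rewrite /kapply; under rsum_ext do rewrite -rsumZl.
  rewrite rsumC; apply: rsum_ext => z.
  by rewrite -(nu_inv z) -rsumZr; apply: rsum_ext => b; ring.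
rewrite (rsum_ext (g := fun b => nu b * ell P pi b + nu b * kapply (Pout P pi) h b -
                                 nu b * h b - J * nu b)); last first.
  by move=> b; rewrite poisson_defectE; ring.
by rewrite !rsumB rsumD nu_Kh rsumZl nu_mass /Jinv; ring.
Qed.

Hypothesis pi_policy : is_policy pi.

Section Expectation.
Variable mu : B -> R.
Hypothesis mu_dist : is_dist mu.

Definition expect (i : nat) (f : B -> R) : R := rsum (fun b => distB P pi mu i b * f b).

Lemma distB_dist i : is_dist (distB P pi mu i).
Proof.
elim: i => [|i [d_ge0 d_mass]] //=; split.
  move=> b'; apply: rsum_ge0 => b; apply: Rmult_le_pos => //.
  exact: (proj1 (Pout_stoch pi_policy b)).
rewrite rsumC -[RHS]d_mass; apply: rsum_ext => b.
by rewrite rsumZl (proj2 (Pout_stoch pi_policy b)) Rmult_1_r.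
Qed.

Lemma expectS i h : expect i.+1 h = expect i (kapply (Pout P pi) h).
Proof.
rewrite /expect /kapply /=.
under rsum_ext do rewrite -rsumZr.
rewrite rsumC; apply: rsum_ext => b; rewrite -rsumZl.
by apply: rsum_ext => b'; ring.
Qed.

Lemma termExp_expect i : termExp P pi mu i = expect i (ell P pi).
Proof.
rewrite /termExp /expect; apply: rsum_ext => b.
rewrite /ell /ellq -rsumZl; apply: rsum_ext => a.
by rewrite -rsumZl; apply: rsum_ext => b'; rewrite /Pout; ring.
Qed.

Lemma Rabs_expect_le i h : Rabs (expect i h) <= rsum (fun b => Rabs (h b)).
Proof.
have [d_ge0 d_mass] := distB_dist i.
apply: Rle_trans (Rabs_rsum_le _) _; apply: rsum_le => b.
rewrite Rabs_mult Rabs_pos_eq // -[X in _ <= X]Rmult_1_l.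
apply: Rmult_le_compat_r; first exact: Rabs_pos.
by rewrite -d_mass; apply: rsum_ge_term.
Qed.

Lemma expect_ge0 i f : (forall b, 0 <= f b) -> 0 <= expect i f.
Proof.
move=> f_ge0; apply: rsum_ge0 => b; apply: Rmult_le_pos => //.
exact: (proj1 (distB_dist i)).
Qed.

Lemma expect_le0 i f : (forall b, f b <= 0) -> expect i f <= 0.
Proof.
move=> f_le0; rewrite -(rsum0 B); apply: rsum_le => b.
rewrite -(Rmult_0_r (distB P pi mu i b)).
by apply: Rmult_le_compat_l; [apply: (proj1 (distB_dist i)) | apply: f_le0].
Qed.

Lemma expSum_telescope J h n :
  expSum P pi mu n = INR n * J + expect 0 h - expect n h +
    \big[Rplus/0]_(0 <= i < n) expect i (poisson_defect J h).
Proof.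
elim: n => [|n IH]; first by rewrite /expSum !big_geq //=; ring.
rewrite /expSum in IH *; rewrite !sumR_nat_recr IH termExp_expect S_INR expectS.
have -> : expect n (poisson_defect J h) =
    expect n (ell P pi) + expect n (kapply (Pout P pi) h) - expect n h - J.
  rewrite /expect (rsum_ext (g := fun b =>
      distB P pi mu n b * ell P pi b + distB P pi mu n b * kapply (Pout P pi) h b -
      distB P pi mu n b * h b - J * distB P pi mu n b)); last first.
    by move=> b; rewrite poisson_defectE; ring.
  by rewrite !rsumB rsumD rsumZl (proj2 (distB_dist n)); ring.
ring.
Qed.

Lemma avg_expSum_eq J h n : (0 < n)%nat ->
  / INR n * expSum P pi mu n =
  J + (expect 0 h - expect n h + \big[Rplus/0]_(0 <= i < n) expect i (poisson_defect J h)) / INR n.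
Proof.
move=> n_gt0; have n_pos : 0 < INR n by apply: lt_0_INR; apply/ltP.
by rewrite (expSum_telescope J h); field; lra.
Qed.

Lemma avg_expSum_le J h n : (0 < n)%nat -> (forall b, poisson_defect J h b <= 0) ->
  / INR n * expSum P pi mu n <= J + 2 * rsum (fun b => Rabs (h b)) / INR n.
Proof.
move=> n_gt0 defect_le0; rewrite (avg_expSum_eq J h n_gt0) /Rdiv.
have n_pos : 0 < INR n by apply: lt_0_INR; apply/ltP.
have sum_le0 : \big[Rplus/0]_(0 <= i < n) expect i (poisson_defect J h) <= 0.
  by apply: (big_ind (fun x => x <= 0)) => [|x y|i _]; [lra | lra | apply: expect_le0].
apply: Rplus_le_compat_l; apply: Rmult_le_compat_r; first exact/Rlt_le/Rinv_0_lt_compat.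
have := Rabs_expect_le 0 h; have := Rabs_expect_le n h.
have := Rle_abs (expect 0 h); have := Rle_abs (- expect n h); rewrite Rabs_Ropp; lra.
Qed.

Lemma avg_expSum_ge J h n : (0 < n)%nat -> (forall b, 0 <= poisson_defect J h b) ->
  J - 2 * rsum (fun b => Rabs (h b)) / INR n <= / INR n * expSum P pi mu n.
Proof.
move=> n_gt0 defect_ge0; rewrite (avg_expSum_eq J h n_gt0) /Rdiv.
have n_pos : 0 < INR n by apply: lt_0_INR; apply/ltP.
have sum_ge0 : 0 <= \big[Rplus/0]_(0 <= i < n) expect i (poisson_defect J h).
  by apply: (big_ind (fun x => 0 <= x)) => [|x y|i _]; [lra | lra | apply: expect_ge0].
set S := \big[Rplus/0]_(0 <= i < n) _ in sum_ge0 *.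
suff : - (2 * rsum (fun b => Rabs (h b))) * / INR n <= (expect 0 h - expect n h + S) * / INR n.
  by lra.
apply: Rmult_le_compat_r; first exact/Rlt_le/Rinv_0_lt_compat.
have := Rabs_expect_le 0 h; have := Rabs_expect_le n h.
have := Rle_abs (- expect 0 h); have := Rle_abs (expect n h); rewrite Rabs_Ropp; lra.
Qed.

Lemma avg_expSum_liminf J h : (forall b, poisson_defect J h b = 0) ->
  is_liminf (fun n => / INR n * expSum P pi mu n) J.
Proof.
move=> h_poisson; apply: (is_liminf_of_div_INR_bound (C := 2 * rsum (fun b => Rabs (h b)))).
move=> n n_gt0; split; [apply: avg_expSum_ge | apply: avg_expSum_le] => // b;
  rewrite h_poisson; exact: Rle_refl.
Qed.

End Expectation.

Lemma exists_poisson_defect0 nu : out_irreducible P pi ->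
  invariant (Pout P pi) nu -> is_dist nu ->
  exists h, forall b, poisson_defect (Jinv P pi nu) h b = 0.
Proof.
move=> pi_irr nu_inv nu_dist.
have [h Hh] := poisson_solution (Pout_stoch pi_policy) (out_irreducible_kpow pi_irr)
  nu_inv nu_dist (ell P pi).
by exists h => b; rewrite poisson_defectE (Hh b) /Jinv; ring.
Qed.

Lemma average_reward_stationary (b0 : B) : out_irreducible P pi ->
  exists nu, is_invariant P pi nu /\
    (forall nu', is_invariant P pi nu' -> nu' = nu) /\
    (forall mu, is_dist mu -> is_liminf (fun n => / INR n * expSum P pi mu n) (Jinv P pi nu)).
Proof.
move=> pi_irr; have pi_stoch := Pout_stoch pi_policy.
have [nu [nu_inv nu_dist]] := exists_invariant_dist pi_stoch b0.
exists nu; split=> [//|]; split=> [nu' [nu'_dist nu'_inv]|mu mu_dist].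
  apply: functional_extensionality => b.
  rewrite (invariant_eq_mass pi_stoch (out_irreducible_kpow pi_irr) nu_inv nu_dist nu'_inv b).
  by rewrite (proj2 nu'_dist) Rmult_1_l.
have [h h_poisson] := exists_poisson_defect0 pi_irr nu_inv nu_dist.
exact: avg_expSum_liminf.
Qed.

End OutputChain.

Section OptimalPolicy.
Variables (A B : finType) (P : B -> A -> B -> R).
Hypotheses (P_chan : is_channel P)
  (P_irr : forall pi, is_policy pi -> out_irreducible P pi).
Variables (J : R) (h : B -> R) (pistar : B -> A -> R).
Hypotheses (pistar_policy : is_policy pistar)
  (J_ub : forall pi nu, is_policy pi -> is_invariant P pi nu -> Jinv P pi nu <= J)
  (h_poisson : forall b, poisson_defect P pistar J h b = 0).

(* Switch [pistar] to [q] at the single state [b]: the defect of the new policy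
   vanishes off [b], so its gain over [J] is [nu' b] times the defect at [b],
   with [nu' b > 0] by irreducibility. *)
Lemma optimal_qvalue_le b q : is_dist q -> qvalue P h b q <= J + h b.
Proof.
move=> q_dist.
pose pi' c := if c == b then q else pistar c.
have pi'_policy : is_policy pi' by move=> c; rewrite /pi'; case: eqP.
have pi'_stoch := Pout_stoch P_chan pi'_policy.
have [nu' [nu'_inv nu'_dist]] := exists_invariant_dist pi'_stoch b.
have gain := Jinv_sub_eq J h nu'_inv nu'_dist.
rewrite (rsum1 (i0 := b)) in gain; last first.
  move=> c c_neq_b; have := h_poisson c.
  by rewrite /poisson_defect /pi' (negbTE c_neq_b) => ->; rewrite Rmult_0_r.
have pi'_b : pi' b = q by rewrite /pi' eqxx.
rewrite /poisson_defect pi'_b in gain.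
have nu'b_pos := invariant_dist_pos pi'_stoch (out_irreducible_kpow (P_irr pi'_policy))
  nu'_inv nu'_dist b.
have Jinv_le := J_ub pi'_policy (conj nu'_dist nu'_inv).
apply: Rnot_lt_le => lt_qvalue.
have : 0 < nu' b * (qvalue P h b q - J - h b) by apply: Rmult_lt_0_compat; lra.
lra.
Qed.

Lemma optimality_equation b :
  is_lub (fun x => exists q, is_dist q /\ x = ellq P b q + rsum (fun z => h z * Pq P b q z))
         (J + h b).
Proof.
split=> [x [q [q_dist ->]]|y y_ub]; first exact: optimal_qvalue_le.
apply: y_ub; exists (pistar b); split; first exact: pistar_policy.
by have := h_poisson b; rewrite /poisson_defect /qvalue; lra.
Qed.

Lemma sup_avg_expSum_liminf mu : is_dist mu ->
  exists c, (forall n, is_lub (fun x => exists pi, is_policy pi /\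
                                 x = / INR n * expSum P pi mu n) (c n)) /\
            is_liminf c J.
Proof.
move=> mu_dist; pose M := rsum (fun b => Rabs (h b)).
have avg_le n pi : (0 < n)%nat -> is_policy pi ->
    / INR n * expSum P pi mu n <= J + 2 * M / INR n.
  move=> n_gt0 pi_policy; apply: avg_expSum_le => // b.
  by have := optimal_qvalue_le b (pi_policy b); rewrite /poisson_defect; lra.
apply: (is_liminf_lub (C := 2 * M)).
- case=> [|n]; last by exists (J + 2 * M / INR n.+1) => x [pi [pi_policy ->]]; apply: avg_le.
  by exists 0 => x [pi [_ ->]]; rewrite /expSum big_geq // Rmult_0_r; apply: Rle_refl.
- by move=> n; exists (/ INR n * expSum P pistar mu n), pistar.
- by move=> n n_gt0 x [pi [pi_policy ->]]; apply: avg_le.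
- move=> n n_gt0; exists (/ INR n * expSum P pistar mu n); split; first by exists pistar.
  by apply: avg_expSum_ge => // b; rewrite h_poisson; apply: Rle_refl.
Qed.

End OptimalPolicy.

Theorem mainTheorem8 (A B : finType) (P : B -> A -> B -> R)
  (hA : (0 < #|A|)%nat) (hB : (0 < #|B|)%nat)
  (hP : is_channel P)
  (hirr : forall pi : B -> A -> R, is_policy pi -> out_irreducible P pi) :
  (forall pi : B -> A -> R, is_policy pi ->
     exists nu : B -> R,
       is_invariant P pi nu /\
       (forall nu' : B -> R, is_invariant P pi nu' -> nu' = nu) /\
       (forall mu : B -> R, is_dist mu ->
          is_liminf (fun n => / INR n * expSum P pi mu n) (Jinv P pi nu))) /\
  (forall (pistar : B -> A -> R) (nustar : B -> R),
     is_policy pistar -> is_invariant P pistar nustar ->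
     (forall (pi : B -> A -> R) (nu : B -> R),
        is_policy pi -> is_invariant P pi nu -> Jinv P pi nu <= Jinv P pistar nustar) ->
     (exists V : B -> R, forall b : B,
        is_lub (fun x => exists q : A -> R, is_dist q /\
                  x = ellq P b q + rsum (fun z => V z * Pq P b q z))
               (Jinv P pistar nustar + V b)) /\
     (forall mu : B -> R, is_dist mu ->
        exists c : nat -> R,
          (forall n, is_lub (fun x => exists pi : B -> A -> R, is_policy pi /\
                                x = / INR n * expSum P pi mu n) (c n)) /\
          is_liminf c (Jinv P pistar nustar))).
Proof.
have [b0 _] := card_gt0P hB.
split=> [pi pi_policy|pistar nustar pistar_policy [nustar_dist nustar_inv] pistar_opt].
  exact: (average_reward_stationary hP pi_policy b0 (hirr pi pi_policy)).
have [h h_poisson] :=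
  exists_poisson_defect0 hP pistar_policy (hirr _ pistar_policy) nustar_inv nustar_dist.
split.
  by exists h => b; exact: (optimality_equation hP hirr pistar_policy pistar_opt h_poisson b).
exact: (sup_avg_expSum_liminf hP hirr pistar_policy pistar_opt h_poisson).
Qed.
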